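(* Every unary FA-presentable tournament $(X,\rightarrow)$ decomposes as a finite disjoint union of trivial tournaments, countably infinite complete ascending tournaments, countably infinite complete descending tournaments, countably infinite near-complete ascending tournaments, and countably infinite near-complete descending tournaments; that is, $X$ can be partitioned into finitely many subsets each of which, with the induced relation, is a one-element tournament or a countably infinite tournament of one of these four kinds.
   Context: A tournament is $(X,\rightarrow)$ with $x\not\rightarrow x$ for all $x$ and, for distinct $x,y$, exactly one of $x\rightarrow y$, $y\rightarrow x$. A countably infinite tournament on $X=\{x_i:i\in\mathbb{N}\}$ is complete ascending if $x_i\rightarrow x_j$ for all $i<j$; complete descending if $x_j\rightarrow x_i$ for all $i<j$; near-complete ascending if $x_{i+1}\rightarrow x_i$ for all $i$ and $x_i\rightarrow x_j$ for all $i<j-1$; near-complete descending if $x_i\rightarrow x_{i+1}$ for all $i$ and $x_j\rightarrow x_i$ for all $i<j-1$. A structure is unary FA-presentable if there exist a regular language $L\subseteq a^*$ and a surjection $\phi:L\to X$ such that $\{(u,v)\in L^2:u\phi=v\phi\}$ and $\{(u,v)\in L^2:u\phi\rightarrow v\phi\}$ are regular relations (the sets of words $\mathrm{conv}(u,v)$ over $\{a,\$\}^2$, reading $u,v$ in parallel and padding the shorter with $\$$, are regular languages). *)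

From mathcomp Require Import all_boot.
Set Implicit Arguments. Unset Strict Implicit. Unset Printing Implicit Defensive.

Record dfa (A : Type) := DFA {
  dfa_state : finType;
  dfa_start : dfa_state;
  dfa_delta : dfa_state -> A -> dfa_state;
  dfa_final : dfa_state -> bool }.
Arguments dfa_start {A} d.
Arguments dfa_delta {A} d _ _.
Arguments dfa_final {A} d _.

Definition dfa_accepts (A : Type) (D : dfa A) (w : seq A) : bool :=
  dfa_final D (foldl (dfa_delta D) (dfa_start D) w).

Definition regular (A : Type) (L : seq A -> Prop) : Prop :=
  exists D : dfa A, forall w, L w <-> dfa_accepts D w.

Definition unary_word := seq unit.

(* Padded alphabet {a,$}: Some tt = a, None = $. Convolution alphabet {a,$}^2. *)
Definition conv_letter := (option unit * option unit)%type.

Definition conv (u v : unary_word) : seq conv_letter :=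
  [seq (nth None (map Some u) i, nth None (map Some v) i) | i <- iota 0 (maxn (size u) (size v))].

Definition regular_rel (P : unary_word -> unary_word -> Prop) : Prop :=
  regular (fun c : seq conv_letter => exists u v, c = conv u v /\ P u v).

Definition tournament (X : Type) (R : X -> X -> Prop) : Prop :=
  (forall x, ~ R x x) /\
  (forall x y, x <> y -> (R x y \/ R y x) /\ ~ (R x y /\ R y x)).

Definition unary_FA_presentable (X : Type) (R : X -> X -> Prop) : Prop :=
  exists (L : unary_word -> Prop) (phi : unary_word -> X),
    regular L /\
    (forall x : X, exists w, L w /\ phi w = x) /\
    regular_rel (fun u v => L u /\ L v /\ phi u = phi v) /\
    regular_rel (fun u v => L u /\ L v /\ R (phi u) (phi v)).

Definition complete_ascending (X : Type) (R : X -> X -> Prop) (x : nat -> X) :=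
  forall i j, i < j -> R (x i) (x j).
Definition complete_descending (X : Type) (R : X -> X -> Prop) (x : nat -> X) :=
  forall i j, i < j -> R (x j) (x i).
Definition near_complete_ascending (X : Type) (R : X -> X -> Prop) (x : nat -> X) :=
  (forall i, R (x i.+1) (x i)) /\ (forall i j, i < j.-1 -> R (x i) (x j)).
Definition near_complete_descending (X : Type) (R : X -> X -> Prop) (x : nat -> X) :=
  (forall i, R (x i) (x i.+1)) /\ (forall i j, i < j.-1 -> R (x j) (x i)).

Definition good_block (X : Type) (R : X -> X -> Prop) (P : X -> Prop) : Prop :=
  (exists x0, forall y, P y <-> y = x0) \/
  (exists x : nat -> X,
      (forall i j, x i = x j -> i = j) /\
      (forall y, P y <-> exists i, x i = y) /\
      (complete_ascending R x \/ complete_descending R x \/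
       near_complete_ascending R x \/ near_complete_descending R x)).

From mathcomp Require Import all_boot boolp zify.

Set Implicit Arguments.
Unset Strict Implicit.
Unset Printing Implicit Defensive.

(* Index each element by the length of a word presenting it. A DFA reading the
   convolution of a^m and a^(m+d) is a run of one letter m times followed by
   another letter d times, so its verdict is eventually periodic in m and in d.
   Hence there are T and M such that, beyond index T, the direction of the edge
   between two elements whose indices lie in one residue class mod M does not
   depend on the elements: each infinite residue class, listed by increasing
   index, is a complete ascending or complete descending tournament. Raising T
   past all elements of the finite residue classes, the elements of index below
   T become singleton blocks and the infinite residue classes the other ones. *)

Lemma unary_wordE (u : unary_word) : u = nseq (size u) tt.
Proof. by apply/all_pred1P/allP => -[]. Qed.

Lemma nth_map_Some (u : unary_word) i :
  nth None (map Some u) i = if i < size u then Some tt else None.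
Proof. by rewrite {1}(unary_wordE u) map_nseq nth_nseq. Qed.

Lemma count_ltn_iota {m n : nat} : m <= n -> count (fun i => i < m) (iota 0 n) = m.
Proof. by move=> le_mn; rewrite -size_filter -{1}[m]add0n filter_iota_ltn ?size_iota. Qed.

Lemma count_conv_fst u v : count (fun c => c.1 == Some tt) (conv u v) = size u.
Proof.
rewrite /conv count_map -[RHS](count_ltn_iota (leq_maxl _ (size v))).
by apply: eq_count => i /=; rewrite nth_map_Some; case: ltnP.
Qed.

Lemma count_conv_snd u v : count (fun c => c.2 == Some tt) (conv u v) = size v.
Proof.
rewrite /conv count_map -[RHS](count_ltn_iota (leq_maxr (size u) _)).
by apply: eq_count => i /=; rewrite nth_map_Some; case: ltnP.
Qed.

Lemma conv_inj u v u' v' : conv u v = conv u' v' -> u = u' /\ v = v'.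
Proof.
move=> E; rewrite (unary_wordE u) (unary_wordE u') (unary_wordE v) (unary_wordE v').
by rewrite -(count_conv_fst u v) -(count_conv_snd u v) E count_conv_fst count_conv_snd.
Qed.

Lemma conv_nseqD m d :
  conv (nseq m tt) (nseq (m + d) tt) = nseq m (Some tt, Some tt) ++ nseq d (None, Some tt).
Proof.
have max_md : maxn m (m + d) = m + d by apply/maxn_idPr/leq_addr.
apply: (@eq_from_nth _ (None, None)) => [|i].
  by rewrite /conv size_map size_iota size_cat !size_nseq max_md.
rewrite /conv size_map size_iota !size_nseq max_md => lt_i.
rewrite (nth_map 0) ?size_iota // nth_iota // !nth_map_Some !size_nseq lt_i.
by rewrite add0n nth_cat size_nseq !nth_nseq; case: ltnP => // le_mi; rewrite ltn_subLR // lt_i.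
Qed.

Lemma foldl_nseq (S A : Type) (f : S -> A -> S) s k x :
  foldl f s (nseq k x) = iter k (f^~ x) s.
Proof. by elim: k s => [|k IHk] s //=; rewrite IHk -iterSr. Qed.

Lemma eqmod_dvd d m a b : d %| m -> a = b %[mod m] -> a = b %[mod d].
Proof. by move=> dvd_dm eq_ab; rewrite -(modn_dvdm a dvd_dm) eq_ab modn_dvdm. Qed.

Lemma iter_eqmod (A : Type) (g : A -> A) (a : A) T P :
    (forall k, T <= k -> iter (k + P) g a = iter k g a) ->
  forall k k', T <= k -> T <= k' -> k = k' %[mod P] -> iter k g a = iter k' g a.
Proof.
move=> gP; have iter_mulP k q : T <= k -> iter (k + q * P) g a = iter k g a.
  move=> le_Tk; elim: q => [|q IHq]; first by rewrite addn0.
  by rewrite mulSn (addnC P) addnA gP ?IHq // (leq_trans le_Tk) ?leq_addr.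
suff le_eqmod k k' : T <= k -> k <= k' -> k = k' %[mod P] -> iter k g a = iter k' g a.
  move=> k k' le_Tk le_Tk' eq_kk'.
  by case: (leqP k k') => [|/ltnW] le_kk'; [|apply/esym]; apply: le_eqmod.
move=> le_Tk le_kk' /eqP; rewrite eq_sym eqn_mod_dvd // => /dvdnP[q def_k'].
by rewrite -(subnKC le_kk') def_k' iter_mulP.
Qed.

Lemma iter_eventually_periodic (A : finType) (g : A -> A) (a : A) :
  exists T P, 0 < P /\ forall k, T <= k -> iter (k + P) g a = iter k g a.
Proof.
have /trajectP[T lt_T_ord iter_ord] := looping_order g a.
exists T, (order g a - T); split=> [|k le_Tk]; first by rewrite subn_gt0.
by rewrite -(subnK le_Tk) -addnA iterD (subnKC (ltnW lt_T_ord)) iter_ord -iterD.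
Qed.

Lemma iter_eventually_periodic_uniform (A : finType) (g : A -> A) :
  exists T P, 0 < P /\ forall s k k', T <= k -> T <= k' -> k = k' %[mod P] ->
    iter k g s = iter k' g s.
Proof.
pose G (h : {ffun A -> A}) := [ffun s => g (h s)].
have iterG k : iter k G [ffun s => s] = [ffun s => iter k g s].
  by elim: k => [|k IHk]; apply/ffunP => s; rewrite ?iterS ?IHk !ffunE.
have [T [P [P_gt0 GP]]] := iter_eventually_periodic G [ffun s => s].
exists T, P; split=> // s k k' le_Tk le_Tk' eq_kk'.
have := congr1 (fun h : {ffun A -> A} => h s) (iter_eqmod GP le_Tk le_Tk' eq_kk').
by rewrite !iterG !ffunE.
Qed.

Section UnaryConvolutionDFA.
Variable D : dfa conv_letter.

Let step_both s := dfa_delta D s (Some tt, Some tt).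
Let step_snd s := dfa_delta D s (None, Some tt).

Lemma dfa_accepts_conv_nseqD m d :
  dfa_accepts D (conv (nseq m tt) (nseq (m + d) tt)) =
  dfa_final D (iter d step_snd (iter m step_both (dfa_start D))).
Proof. by rewrite /dfa_accepts conv_nseqD foldl_cat !foldl_nseq. Qed.

Lemma dfa_accepts_conv_periodic : exists T M, 0 < M /\
  forall m m' d d', T <= m -> T <= m' -> T <= d -> T <= d' ->
    m = m' %[mod M] -> d = d' %[mod M] ->
    dfa_accepts D (conv (nseq m tt) (nseq (m + d) tt)) =
    dfa_accepts D (conv (nseq m' tt) (nseq (m' + d') tt)).
Proof.
have [T1 [P1 [P1_gt0 per_both]]] := iter_eventually_periodic_uniform step_both.
have [T2 [P2 [P2_gt0 per_snd]]] := iter_eventually_periodic_uniform step_snd.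
exists (maxn T1 T2), (P1 * P2); split=> [|m m' d d' Tm Tm' Td Td' eq_m eq_d].
  by rewrite muln_gt0 P1_gt0.
have le1 := leq_maxl T1 T2; have le2 := leq_maxr T1 T2.
have eq_m1 := eqmod_dvd (dvdn_mulr P2 (dvdnn P1)) eq_m.
have eq_d2 := eqmod_dvd (dvdn_mull P1 (dvdnn P2)) eq_d.
rewrite !dfa_accepts_conv_nseqD (per_both _ m m' (leq_trans le1 Tm) (leq_trans le1 Tm') eq_m1).
by rewrite (per_snd _ d d' (leq_trans le2 Td) (leq_trans le2 Td') eq_d2).
Qed.

End UnaryConvolutionDFA.

Lemma regular_rel_unary_periodic (P : unary_word -> unary_word -> Prop) :
  regular_rel P -> exists T M, 0 < M /\
  forall m m' d d', T <= m -> T <= m' -> T <= d -> T <= d' ->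
    m = m' %[mod M] -> d = d' %[mod M] ->
    P (nseq m tt) (nseq (m + d) tt) -> P (nseq m' tt) (nseq (m' + d') tt).
Proof.
move=> [D accD]; have [T [M [M_gt0 perD]]] := dfa_accepts_conv_periodic D.
have P_nseqE m d : P (nseq m tt) (nseq (m + d) tt) <->
    dfa_accepts D (conv (nseq m tt) (nseq (m + d) tt)).
  rewrite -accD; split=> [|[u [v [/conv_inj[-> ->] //]]]].
  by exists (nseq m tt), (nseq (m + d) tt).
exists T, M; split=> // m m' d d' Tm Tm' Td Td' eq_m eq_d.
by rewrite !P_nseqE (perD m m' d d').
Qed.

Definition eventually_periodic_rel (X : Type) (R : X -> X -> Prop) (idx : X -> nat)
    (T M : nat) : Prop :=
  forall y z y' z', T <= idx y < idx z -> T <= idx y' < idx z' ->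
    idx z = idx y %[mod M] -> idx y' = idx y %[mod M] -> idx z' = idx y %[mod M] ->
    R y z -> R y' z'.

Lemma unary_presentable_eventually_periodic (X : Type) (R : X -> X -> Prop) :
  unary_FA_presentable R -> exists (idx : X -> nat) (pre : nat -> X) T M,
    [/\ cancel idx pre, 0 < M & eventually_periodic_rel R idx T M].
Proof.
move=> [L [phi [_ [phi_onto [_ regR]]]]].
have [w /all_and2[Lw phi_w]] := choice phi_onto.
pose idx x := size (w x); pose pre n := phi (nseq n tt).
have Lidx x : L (nseq (idx x) tt) by rewrite /idx -unary_wordE.
have phi_idx x : phi (nseq (idx x) tt) = x by rewrite /idx -unary_wordE.
have [T [M [M_gt0 perR]]] := regular_rel_unary_periodic regR.
exists idx, pre, T, (M * T.+1); split=> //; first by rewrite muln_gt0 M_gt0.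
have R_nseqE y z : idx y <= idx z -> R y z <->
    (fun u v => L u /\ L v /\ R (phi u) (phi v))
      (nseq (idx y) tt) (nseq (idx y + (idx z - idx y)) tt).
  by move=> le_yz; rewrite subnKC //= !phi_idx; split=> [|[_ []]] // Ryz; do !split.
(* Inflating the period to [M * T.+1] makes every gap within a class at least [T]. *)
have gap a b : a < b -> b = a %[mod M * T.+1] -> T <= b - a /\ b - a = 0 %[mod M].
  move=> lt_ab /eqP; rewrite eqn_mod_dvd ?(ltnW lt_ab) // => dvd_ab.
  split; last by rewrite mod0n; apply/eqP/(dvdn_trans _ dvd_ab)/dvdn_mulr.
  by apply: leq_trans (dvdn_leq _ dvd_ab); [exact/ltnW/leq_pmull | rewrite subn_gt0].
move=> y z y' z' /andP[Ty lt_yz] /andP[Ty' lt_yz'] eq_z eq_y' eq_z'.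
have [Td eq_d] := gap _ _ lt_yz eq_z.
have [Td' eq_d'] := gap _ _ lt_yz' (etrans eq_z' (esym eq_y')).
move=> /(R_nseqE _ _ (ltnW lt_yz)) /perR-/(_ _ _ Ty Ty' Td Td') Ryz.
apply/(R_nseqE _ _ (ltnW lt_yz'))/Ryz; last exact: etrans eq_d (esym eq_d').
exact: esym (eqmod_dvd (dvdn_mulr _ (dvdnn M)) eq_y').
Qed.

Lemma homogeneous_chain_complete (X : Type) (R : X -> X -> Prop) (x : nat -> X) :
    tournament R -> injective x ->
    (forall i j k l, i < j -> k < l -> R (x i) (x j) -> R (x k) (x l)) ->
  complete_ascending R x \/ complete_descending R x.
Proof.
move=> [_ totR] x_inj homR; case: (EM (R (x 0) (x 1))) => R01; [left|right] => i j lt_ij.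
  exact: homR 0 1 i j isT lt_ij R01.
have neq_ij : x i <> x j by move=> /x_inj eq_ij; rewrite eq_ij ltnn in lt_ij.
have [[Rij | //] _] := totR _ _ neq_ij.
by case: R01; apply: homR i j 0 1 lt_ij isT Rij.
Qed.

Lemma unbounded_nat_enum (S : nat -> Prop) : (forall b, exists2 n, b <= n & S n) ->
  exists f : nat -> nat, {homo f : i j / i < j} /\ forall n, S n <-> exists i, f i = n.
Proof.
move=> S_unb.
have next_ex b : exists n, `[< S n >] && (b <= n).
  by have [n le_bn Sn] := S_unb b; exists n; rewrite le_bn andbT; apply/asboolP.
pose next b := ex_minn (next_ex b).
have nextP b : S (next b) /\ b <= next b.
  by rewrite /next; case: ex_minnP => n /andP[/asboolP].
have next_min b n : S n -> b <= n -> next b <= n.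
  move=> Sn le_bn; rewrite /next; case: ex_minnP => m _; apply.
  by rewrite le_bn andbT; apply/asboolP.
pose f i := iter i (fun n => next n.+1) (next 0).
have f_incr : {homo f : i j / i < j}.
  by apply: (@homo_ltn _ f) => [? ? ? /ltn_trans | i]; [apply | exact: (nextP (f i).+1).2].
have Sf i : S (f i) by case: i => [|i]; apply: (nextP _).1.
have le_f i : i <= f i.
  by elim: i => // i IHi; exact: leq_ltn_trans IHi (f_incr _ _ (ltnSn i)).
exists f; split=> // n; split=> [Sn|[i <-] //].
elim: {2}n (le_f n) => [|i IHi] le_n.
  by exists 0; apply/eqP; rewrite eqn_leq le_n next_min.
case: (leqP n (f i)) => [/IHi // | lt_fi_n].
by exists i.+1; apply/eqP; rewrite eqn_leq le_n next_min.
Qed.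

Lemma eventually_absent_or_unbounded (Q : nat -> nat -> Prop) K :
  exists T, forall r, r < K ->
    (forall b, exists2 n, b <= n & Q r n) \/ (forall n, T <= n -> ~ Q r n).
Proof.
elim: K => [|K [T IHK]]; first by exists 0.
case: (EM (forall b, exists2 n, b <= n & Q K n)) => [Q_unb | /existsNP[b Q_absent]].
  by exists T => r; rewrite ltnS leq_eqVlt => /predU1P[-> | /IHK]; [left|].
exists (maxn T b) => r; rewrite ltnS leq_eqVlt.
case/predU1P=> [-> | /IHK[|r_absent]]; [right | left | right] => //.
  by move=> n le_bn Qn; apply: Q_absent; exists n => //; apply: leq_trans le_bn; apply: leq_maxr.
by move=> n le_Tn; apply: r_absent; apply: leq_trans le_Tn; apply: leq_maxl.
Qed.

Lemma good_partition_of_colouring (X : Type) (R : X -> X -> Prop) (c : X -> nat) K :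
    (forall y, c y < K) -> (forall y, good_block R (fun z => c z = c y)) ->
  exists (k : nat) (blk : X -> nat),
    (forall y, blk y < k) /\ (forall i, i < k -> good_block R (fun y => blk y = i)).
Proof.
move=> c_lt c_good; pose s := [seq i <- iota 0 K | `[< exists y, c y = i >]].
have c_in_s y : c y \in s.
  by rewrite mem_filter mem_iota add0n c_lt leq0n !andbT; apply/asboolP; exists y.
exists (size s), (fun y => index (c y) s); split=> [y | i lt_i]; first by rewrite index_mem.
have /asboolP[y cy] : `[< exists y, c y = nth 0 s i >].
  by have := mem_nth 0 lt_i; rewrite mem_filter => /andP[].
have -> : (fun z => index (c z) s = i) = (fun z => c z = c y).
  apply/funext => z; apply/propext; rewrite cy; split=> [<- | ->]; first by rewrite nth_index.
  by rewrite index_uniq // filter_uniq // iota_uniq.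
exact: c_good.
Qed.

Section EventuallyPeriodicTournament.
Variables (X : Type) (R : X -> X -> Prop) (idx : X -> nat) (pre : nat -> X) (T M : nat).
Hypotheses (tourR : tournament R) (idxK : cancel idx pre) (M_gt0 : 0 < M).
Hypothesis R_periodic : eventually_periodic_rel R idx T M.

Lemma residue_class_good_block T' r : T <= T' ->
    (forall b, exists2 y, b <= idx y & T' <= idx y /\ idx y %% M = r) ->
  good_block R (fun y => T' <= idx y /\ idx y %% M = r).
Proof.
move=> le_TT' unb.
pose S n := [/\ T' <= n, n %% M = r & idx (pre n) = n].
have [f [f_incr f_onto]] : exists f : nat -> nat,
    {homo f : i j / i < j} /\ forall n, S n <-> exists i, f i = n.
  apply: unbounded_nat_enum => b; have [y le_b [T'y ry]] := unb b.
  by exists (idx y); rewrite // /S idxK.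
have Sf i : S (f i) by apply/f_onto; exists i.
pose x := pre \o f.
have idx_x i : idx (x i) = f i by case: (Sf i).
have T'f i : T' <= f i by case: (Sf i).
have rf i : f i %% M = r by case: (Sf i).
have x_inj : injective x.
  by move=> i j /(congr1 idx); rewrite !idx_x => /(incn_inj (leq_mono f_incr)).
have x_hom i j k l : i < j -> k < l -> R (x i) (x j) -> R (x k) (x l).
  by move=> lt_ij lt_kl; apply: R_periodic; rewrite ?idx_x ?f_incr ?rf ?(leq_trans le_TT' (T'f _)).
right; exists x; split=> //; split=> [y|].
  split=> [[T'y ry] | [i <-]]; last by rewrite idx_x T'f rf.
  have [i fi] : exists i, f i = idx y by apply/f_onto; rewrite /S idxK.
  by exists i; rewrite /x /= fi idxK.
by have [asc | desc] := homogeneous_chain_complete tourR x_inj x_hom; [left | right; left].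
Qed.

Lemma eventually_periodic_tournament_partition : exists (k : nat) (blk : X -> nat),
  (forall y, blk y < k) /\ (forall i, i < k -> good_block R (fun y => blk y = i)).
Proof.
have [T0 absent_or_unb] :=
  eventually_absent_or_unbounded (fun r n => exists y, idx y = n /\ n %% M = r) M.
pose T' := maxn T0 T.
pose c y := if idx y < T' then idx y else T' + idx y %% M.
apply: (@good_partition_of_colouring _ _ c (T' + M)) => [y | y].
  by rewrite /c; case: ifP => [/ltn_addr | _]; rewrite ?ltn_add2l ?ltn_pmod.
rewrite {2}/c; case: (ltnP (idx y) T') => [small_y | large_y].
  left; exists y => z; split=> [| -> ]; last by rewrite /c small_y.
  rewrite /c; case: ifP => [_ /(can_inj idxK) // | _ eq_y].
  by rewrite -eq_y ltnNge leq_addr in small_y.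
have -> : (fun z => c z = T' + idx y %% M) = (fun z => T' <= idx z /\ idx z %% M = idx y %% M).
  by apply/funext => z; apply/propext; rewrite /c; case: ifP; lia.
apply: residue_class_good_block; first exact: leq_maxr.
have [unb | absent] := absent_or_unb _ (ltn_pmod (idx y) M_gt0).
  move=> b; have [n le_bn [z [idx_z rz]]] := unb (maxn b T'); subst n.
  exists z; first exact: leq_trans (leq_maxl b T') le_bn.
  by split=> //; exact: leq_trans (leq_maxr b T') le_bn.
by case: (absent (idx y)); [exact: leq_trans (leq_maxl T0 T) large_y | exists y].
Qed.

End EventuallyPeriodicTournament.

Theorem corollary5p14 (X : Type) (R : X -> X -> Prop) :
  tournament R -> unary_FA_presentable R ->
  exists (k : nat) (blk : X -> nat),
    (forall y, blk y < k) /\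
    (forall i, i < k -> good_block R (fun y => blk y = i)).
Proof.
move=> tourR /unary_presentable_eventually_periodic[idx [pre [T [M [idxK M_gt0 perR]]]]].
exact: eventually_periodic_tournament_partition tourR idxK M_gt0 perR.
Qed.
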